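(* Let $V_1,V_2$ be complex vector spaces of dimensions $n_1\geq 2$, $n_2\geq 2$, with bases $(e_1,\dots,e_{n_1})$ and $(f_1,\dots,f_{n_2})$, and let $n=\min(n_1,n_2)$. Let $G=\mathrm{GL}(V_1)\times\mathrm{GL}(V_2)$ act naturally on $\overline{X}=\mathbb{P}(V_1)\times\mathbb{P}(V_2)\times\mathbb{P}((V_1\otimes V_2)^* )$ and let $\overline{\mathcal{L}}=\mathcal{O}(1)\boxtimes\mathcal{O}(1)\boxtimes\mathcal{O}(1)$ with its natural $G$-linearisation. Then the set $\overline{X}^{us}(\overline{\mathcal{L}})$ of unstable points is the closure of the $G$-orbit of $\overline{x}=(\mathbb{C}e_1,\mathbb{C}f_2,\mathbb{C}\varphi_n)$, where $\varphi_n=\sum_{i=1}^n e_i^*\otimes f_i^*\in V_1^*\otimes V_2^*\simeq(V_1\otimes V_2)^*$.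
   Context: $(e_i^* )$ and $(f_j^* )$ are the dual bases. $G$ acts on $(V_1\otimes V_2)^*$ by the contragredient of the tensor product action. For a $G$-linearised line bundle $\mathcal{N}$ on a $G$-variety $Y$, the semi-stable set is $Y^{ss}(\mathcal{N})=\{y:\exists k\geq1,\exists\sigma\in\mathrm{H}^0(Y,\mathcal{N}^{\otimes k})^G,\ \sigma(y)\neq0\}$, and the unstable set $Y^{us}(\mathcal{N})$ is its complement. *)

From HB Require Import structures.
From mathcomp Require Import all_boot all_order all_algebra.
From mathcomp Require Import reals.
From mathcomp Require Import complex.
From mathcomp Require Import mpoly.
Set Implicit Arguments. Unset Strict Implicit. Unset Printing Implicit Defensive.
Import GRing.Theory Num.Theory.
Local Open Scope ring_scope.

Section Setup.
Variable R : realType.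
Local Notation C := (R[i]).
Variables n1 n2 : nat.

(* Affine cone coordinates of Xbar = P(V1) x P(V2) x P((V1 (x) V2)^* ):
   V1 = C^n1, V2 = C^n2 (column vectors), and a bilinear form
   phi in (V1 (x) V2)^* is an n1 x n2 matrix M with phi(v (x) w) = v^T M w.
   The polynomial ring has n1 + n2 + n1*n2 variables: first the coordinates
   of v, then those of w, then the entries of M. *)
Definition nvar : nat := (n1 + n2 + n1 * n2)%N.

Definition coords (v : 'cV[C]_n1) (w : 'cV[C]_n2) (M : 'M[C]_(n1, n2))
  : 'I_nvar -> C :=
  fun i => (row_mx (row_mx v^T w^T) (mxvec M)) 0 i.

Definition deg1 (m : 'X_{1.. nvar}) : nat :=
  (\sum_(i < nvar | (i < n1)%N) m i)%N.
Definition deg2 (m : 'X_{1.. nvar}) : nat :=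
  (\sum_(i < nvar | (n1 <= i < n1 + n2)%N) m i)%N.
Definition deg3 (m : 'X_{1.. nvar}) : nat :=
  (\sum_(i < nvar | (n1 + n2 <= i)%N) m i)%N.

(* p is multihomogeneous of multidegree (a,b,c), i.e. a section of
   O(a) [x] O(b) [x] O(c) on Xbar *)
Definition multihomog (p : {mpoly C[nvar]}) (a b c : nat) : Prop :=
  forall m, m \in msupp p -> [/\ deg1 m = a, deg2 m = b & deg3 m = c].

(* natural action of G = GL(V1) x GL(V2); on (V1 (x) V2)^* it is the
   contragredient of the tensor product action *)
Definition act (g : 'M[C]_n1) (h : 'M[C]_n2)
  (v : 'cV[C]_n1) (w : 'cV[C]_n2) (M : 'M[C]_(n1, n2)) :=
  (g *m v, h *m w, (invmx g)^T *m M *m invmx h).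

Definition eval_act (p : {mpoly C[nvar]}) g h v w M : C :=
  let: (v', w', M') := act g h v w M in p.@[coords v' w' M'].

Definition Ginvariant (p : {mpoly C[nvar]}) : Prop :=
  forall (g : 'M[C]_n1) (h : 'M[C]_n2), g \in unitmx -> h \in unitmx ->
  forall v w M, eval_act p g h v w M = p.@[coords v w M].

(* semi-stable / unstable points for Lbar = O(1) [x] O(1) [x] O(1):
   H^0(Xbar, Lbar^k)^G = G-invariant multihomogeneous polys of degree (k,k,k) *)
Definition semistable v w M : Prop :=
  exists k : nat, (1 <= k)%N /\
  exists p : {mpoly C[nvar]},
    [/\ multihomog p k k k, Ginvariant p & p.@[coords v w M] != 0].

Definition unstable v w M : Prop := ~ semistable v w M.

Definition e1 : 'cV[C]_n1 := \col_(i < n1) (((i : nat) == 0%N)%:R).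
Definition f2 : 'cV[C]_n2 := \col_(j < n2) (((j : nat) == 1%N)%:R).
Definition phin : 'M[C]_(n1, n2) :=
  \matrix_(i < n1, j < n2) ((((i : nat) == j) && (i < minn n1 n2)%N)%:R).

(* (Zariski) closure of the G-orbit of xbar in Xbar: a point lies in it iff
   every multihomogeneous polynomial vanishing on the orbit vanishes at it *)
Definition in_orbit_closure v w M : Prop :=
  forall (a b c : nat) (p : {mpoly C[nvar]}), multihomog p a b c ->
    (forall (g : 'M[C]_n1) (h : 'M[C]_n2), g \in unitmx -> h \in unitmx ->
       eval_act p g h e1 f2 phin = 0) ->
    p.@[coords v w M] = 0.

End Setup.

(* The bilinear form [v^T M w] is a G-invariant of multidegree (1,1,1), so an
   unstable point has [v^T M w = 0].  Conversely, (diag(2,1,..), diag(1/2,1,..))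
   fixes [phi_n] and [f2] but doubles [e1], so every invariant of positive
   degree vanishes at xbar and hence on its orbit closure.  It remains to see
   that a point with [v, w <> 0] and [v^T M w = 0] is in the orbit closure.
   Moving [v, w] to [e1, f2] makes [M 0 1 = 0]; after a perturbation along a
   line, [M = A phi_n B] with [A^T e1 = e1] and [B f2 = f2], and then for all
   but finitely many [t] the point [(e1, f2, (A + t) phi_n (B + t))] lies in the
   orbit of xbar up to rescaling [e1] and [f2].  A polynomial vanishing at all
   but finitely many points of a line vanishes on the whole line. *)

From mathcomp Require Import all_boot all_order all_algebra perm.
From mathcomp Require Import reals complex mpoly.
From mathcomp Require Import ring zify.
Import GRing.Theory Num.Theory.
Local Open Scope ring_scope.
Set Implicit Arguments. Unset Strict Implicit. Unset Printing Implicit Defensive.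

Section RankOneUpdate.
Variables (F : fieldType) (k : nat).

Lemma unitmx_rank1_update (x : 'cV[F]_k) (r : 'rV[F]_k) :
  1 + (r *m x) 0 0 != 0 -> 1%:M + x *m r \in unitmx.
Proof.
set c := (r *m x) 0 0 => c0.
have rx : r *m x = c%:M by rewrite [LHS]mx11_scalar.
have xrxr : x *m r *m (x *m r) = c *: (x *m r).
  by rewrite mulmxA -(mulmxA x) rx mul_mx_scalar scalemxAl.
(* Sherman-Morrison formula *)
suff /mulmx1_unit[] :
  (1%:M + x *m r) *m (1%:M - (1 + c)^-1 *: (x *m r)) = 1%:M by [].
rewrite mulmxDl mul1mx mulmxBr mulmx1 -scalemxAr xrxr scalerA.
rewrite -addrA -[X in _ + (X - _)]scale1r -scalerBl -scaleNr -scalerDl.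
have -> : - (1 + c)^-1 + (1 - (1 + c)^-1 * c) = 0 by field.
by rewrite scale0r addr0.
Qed.

Definition idmx_with_col (l : 'I_k) (u : 'cV[F]_k) : 'M[F]_k :=
  1%:M + (u - delta_mx l 0) *m delta_mx 0 l.

Lemma idmx_with_col_delta (l : 'I_k) (u : 'cV[F]_k) :
  idmx_with_col l u *m delta_mx l 0 = u.
Proof.
rewrite mulmxDl mul1mx -mulmxA mul_delta_mx.
have -> : delta_mx 0 0 = 1%:M :> 'M[F]_1 by apply/matrixP => i j; rewrite !ord1 !mxE.
by rewrite mulmx1 addrC subrK.
Qed.

Lemma unitmx_idmx_with_col (l : 'I_k) (u : 'cV[F]_k) :
  u l 0 != 0 -> idmx_with_col l u \in unitmx.
Proof.
move=> ul0; apply: unitmx_rank1_update.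
by rewrite -rowE !mxE !eqxx /= addrCA subrr addr0.
Qed.

Lemma trmx_idmx_with_col_delta (l a : 'I_k) (u : 'cV[F]_k) : a != l -> u a 0 = 0 ->
  (idmx_with_col l u)^T *m delta_mx a (0 : 'I_1) = delta_mx a 0.
Proof.
move=> al ua0; rewrite linearD /= trmx1 mulmxDl mul1mx trmx_mul trmx_delta -mulmxA.
suff -> : (u - delta_mx l 0)^T *m delta_mx a (0 : 'I_1) = 0 by rewrite mulmx0 addr0.
apply/matrixP => i j; rewrite !ord1 -colE !mxE ua0 (negbTE al) /=.
by rewrite subrr.
Qed.

Lemma exists_unitmx_col (u : 'cV[F]_k) (j : 'I_k) : u != 0 ->
  exists2 g : 'M[F]_k, g \in unitmx & g *m delta_mx j 0 = u.
Proof.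
move=> u0; have [l ul0] : exists l, u l 0 != 0.
  apply/existsP; apply: contraR u0; rewrite negb_exists => /forallP u0.
  by apply/eqP/matrixP => i z; rewrite ord1 mxE; apply/eqP/negPn.
exists (idmx_with_col l u *m tperm_mx j l).
  by rewrite unitmx_mul unitmx_idmx_with_col // unitmx_perm.
rewrite -mulmxA -[RHS](idmx_with_col_delta l); congr (_ *m _).
apply/matrixP => i z; rewrite -colE !mxE ord1 eqxx andbT.
by rewrite -[X in _ == X](tpermR j l) (inj_eq perm_inj).
Qed.
End RankOneUpdate.

Lemma exists_pid_mx_factor (F : fieldType) m k (le_mk : (m <= k)%N)
    (X : 'M[F]_(m, k)) (a b : 'I_m) (b' := widen_ord le_mk b) :
  a != b -> X a b' = 0 -> X b b' != 0 ->
  exists A B, [/\ X = A *m pid_mx m *m B,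
    A^T *m delta_mx a (0 : 'I_1) = delta_mx a 0
    & B *m delta_mx b' (0 : 'I_1) = delta_mx b' 0].
Proof.
move=> ab Xab Xbb; pose u := X *m delta_mx b' (0 : 'I_1).
have colXE : u = idmx_with_col b u *m delta_mx b 0 by rewrite idmx_with_col_delta.
have uA : idmx_with_col b u \in unitmx.
  by apply: unitmx_idmx_with_col; rewrite /u -colE mxE.
have pid_pidT : (pid_mx m : 'M[F]_(m, k)) *m (pid_mx m)^T = 1%:M.
  by rewrite tr_pid_mx mul_pid_mx minnn (minn_idPr le_mk) pid_mx_1.
exists (idmx_with_col b u), ((pid_mx m)^T *m invmx (idmx_with_col b u) *m X).
split.
- by rewrite -!mulmxA (mulmxA (pid_mx m)) pid_pidT mul1mx mulmxA mulmxV ?mul1mx.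
- by apply: trmx_idmx_with_col_delta; rewrite // /u -colE mxE.
rewrite -!mulmxA -/u {2}colXE mulKmx // tr_pid_mx.
apply/matrixP => i z; rewrite -colE !ord1 !mxE eqxx !andbT -val_eqE /=.
by case: eqP => // ->; rewrite ltn_ord.
Qed.

Lemma invmx_mul (F : comUnitRingType) k (A B : 'M[F]_k) :
  A \in unitmx -> B \in unitmx -> invmx (A *m B) = invmx B *m invmx A.
Proof.
move=> uA uB.
have ABK : A *m B *m (invmx B *m invmx A) = 1%:M by rewrite mulmxA mulmxK // mulmxV.
by rewrite -[LHS]mulmx1 -ABK mulmxA mulVmx ?unitmx_mul ?uA ?uB // mul1mx.
Qed.

Lemma invmx_eigenvector (F : fieldType) k (A : 'M[F]_k) (x : 'cV[F]_k) c :
  A \in unitmx -> c != 0 -> A *m x = c *: x -> invmx A *m x = c^-1 *: x.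
Proof. by move=> uA c0 Ax; rewrite -{1}[x](scalerK c0) -Ax -scalemxAr mulKmx. Qed.

Lemma poly_eq0_off_roots (F : numDomainType) (q d : {poly F}) :
  d != 0 -> (forall t, d.[t] != 0 -> q.[t] = 0) -> q = 0.
Proof.
move=> d0 qd; suff /eqP : q * d = 0 by rewrite mulf_eq0 (negbTE d0) orbF => /eqP.
pose rs := [seq k%:R | k <- iota 0 (size (q * d))] : seq F.
apply: (@roots_geq_poly_eq0 _ _ rs); last by rewrite size_map size_iota.
  apply/allP => t _; rewrite /root hornerM.
  by have [->|/qd ->] := eqVneq d.[t] 0; rewrite ?mulr0 ?mul0r.
by rewrite map_inj_uniq ?iota_uniq // => i j /eqP; rewrite eqr_nat => /eqP.
Qed.

Lemma horner_mmap_polyC (F : comNzRingType) n (p : {mpoly F[n]})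
    (x : 'I_n -> {poly F}) t :
  (mmap polyC x p).[t] = p.@[fun i => (x i).[t]].
Proof.
rewrite mevalE /mmap -horner_evalE rmorph_sum; apply: eq_bigr => m _.
rewrite rmorphM rmorph_prod /= horner_evalE hornerC; congr (_ * _).
by apply: eq_bigr => i _; rewrite rmorphXn.
Qed.

Lemma map_mx_horner_polyC (F : comNzRingType) m k (A : 'M[F]_(m, k)) t :
  map_mx (horner_eval t) (map_mx polyC A) = A.
Proof. by apply/matrixP => i j; rewrite !mxE /= horner_evalE hornerC. Qed.

Lemma map_mx_horner_line (F : comNzRingType) m k (A B : 'M[F]_(m, k)) t :
  map_mx (horner_eval t) (map_mx polyC A + 'X *: map_mx polyC B) = A + t *: B.
Proof.
apply/matrixP => i j; rewrite !mxE /= horner_evalE.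
by rewrite hornerD hornerC hornerM hornerX hornerC.
Qed.

Lemma map_mx_horner_char_poly_mx (F : comNzRingType) k (A : 'M[F]_k) t :
  map_mx (horner_eval t) (char_poly_mx A) = t%:M - A.
Proof.
apply/matrixP => i j; rewrite !mxE /= horner_evalE.
by rewrite hornerD hornerN hornerMn hornerX hornerC.
Qed.

Lemma horner_char_poly (F : comNzRingType) k (A : 'M[F]_k) t :
  (char_poly A).[t] = \det (t%:M - A).
Proof.
by rewrite -horner_evalE -det_map_mx map_mx_horner_char_poly_mx.
Qed.

Section Proposition3p3.
Variables (R : realType) (n1 n2 : nat).
Local Notation C := R[i].
Local Notation N := (nvar n1 n2).
Local Notation e1 := (e1 R n1).
Local Notation f2 := (f2 R n2).
Local Notation phin := (phin R n1 n2).

Definition iv (a : 'I_n1) : 'I_N := lshift (n1 * n2) (lshift n2 a).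
Definition iw (b : 'I_n2) : 'I_N := lshift (n1 * n2) (rshift n1 b).
Definition iM (a : 'I_n1) (b : 'I_n2) : 'I_N :=
  rshift (n1 + n2) (mxvec_index a b).

Variant coord_index_spec : 'I_N -> Type :=
  | CoordV a : coord_index_spec (iv a)
  | CoordW b : coord_index_spec (iw b)
  | CoordM a b : coord_index_spec (iM a b).

Lemma coord_indexP i : coord_index_spec i.
Proof.
case: (split_ordP i) => [j ->|k ->].
  by case: (split_ordP j) => [a ->|b ->]; constructor.
by case: (mxvec_indexP k) => a b; constructor.
Qed.

Section CoordsAt.
Variables (v : 'cV[C]_n1) (w : 'cV[C]_n2) (M : 'M[C]_(n1, n2)).
Lemma coords_iv a : coords v w M (iv a) = v a 0.
Proof. by rewrite /coords /iv !row_mxEl mxE. Qed.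
Lemma coords_iw b : coords v w M (iw b) = w b 0.
Proof. by rewrite /coords /iw row_mxEl row_mxEr mxE. Qed.
Lemma coords_iM a b : coords v w M (iM a b) = M a b.
Proof. by rewrite /coords /iM row_mxEr mxvecE. Qed.
End CoordsAt.

Definition block_scale (s t u : C) (i : 'I_N) : C :=
  if (i < n1)%N then s else if (i < n1 + n2)%N then t else u.

Lemma coords_scale s t u v w M i :
  coords (s *: v) (t *: w) (u *: M) i = block_scale s t u i * coords v w M i.
Proof.
rewrite /block_scale; case: (coord_indexP i) => [a|b|a b].
- by rewrite !coords_iv /= ltn_ord mxE.
- by rewrite !coords_iw /= ltnNge leq_addr /= ltn_add2l ltn_ord mxE.
have le_iM : (n1 + n2 <= iM a b)%N by apply: leq_addr.
rewrite !coords_iM mxE !ifN // -leqNgt //.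
by rewrite (leq_trans _ le_iM) ?leq_addr.
Qed.

Lemma prod_block_scale s t u (m : 'X_{1.. N}) :
  \prod_i block_scale s t u i ^+ m i = s ^+ deg1 m * t ^+ deg2 m * u ^+ deg3 m.
Proof.
rewrite /deg1 /deg2 /deg3 -!prodrXr !(big_mkcond (fun i : 'I_N => _ < _)%N).
rewrite (big_mkcond (fun i : 'I_N => _ <= _ < _)%N).
rewrite (big_mkcond (fun i : 'I_N => _ <= _)%N) -!big_split /=.
apply: eq_bigr => i _; rewrite /block_scale.
case: (ltnP i n1) => [lt_i_n1|le_n1_i] /=.
  by rewrite ifN ?mulr1 // -ltnNge (leq_trans lt_i_n1) ?leq_addr.
by case: (ltnP i (n1 + n2)) => _; rewrite ?mulr1 ?mul1r.
Qed.

Lemma meval_coords_scale (p : {mpoly C[N]}) a b c s t u v w M :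
  multihomog p a b c ->
  p.@[coords (s *: v) (t *: w) (u *: M)] =
  s ^+ a * t ^+ b * u ^+ c * p.@[coords v w M].
Proof.
move=> p_homog; rewrite !mevalE big_distrr /=; apply: eq_big_seq => m pm.
under eq_bigr do rewrite coords_scale exprMn.
have [<- <- <-] := p_homog m pm.
by rewrite big_split /= prod_block_scale mulrCA.
Qed.

Definition bilin_mnm (a : 'I_n1) (b : 'I_n2) : 'X_{1.. N} :=
  (U_(iv a) + U_(iM a b) + U_(iw b))%MM.

Definition bilin : {mpoly C[N]} := \sum_a \sum_b 'X_[bilin_mnm a b].

Lemma bilinE (v : 'cV[C]_n1) (w : 'cV[C]_n2) (M : 'M[C]_(n1, n2)) :
  (v^T *m M *m w) 0 0 = \sum_a \sum_b v a 0 * M a b * w b 0.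
Proof.
rewrite mxE; under eq_bigr do rewrite mxE big_distrl.
rewrite exchange_big /=; apply: eq_bigr => a _; apply: eq_bigr => b _.
by rewrite mxE.
Qed.

Lemma meval_bilin v w M : bilin.@[coords v w M] = (v^T *m M *m w) 0 0.
Proof.
rewrite bilinE /bilin raddf_sum /=; apply: eq_bigr => a _.
rewrite raddf_sum /=; apply: eq_bigr => b _.
by rewrite /bilin_mnm !mpolyXD !mevalM !mevalXU coords_iv coords_iw coords_iM.
Qed.

Lemma sum_pred1 (P : pred 'I_N) (i : 'I_N) :
  (\sum_(l | P l) (i == l))%N = P i.
Proof.
rewrite big_mkcond (bigD1 i) //= big1 => [|l /negbTE il]; rewrite ?eqxx.
  by case: (P i).
by rewrite eq_sym il; case: (P l).
Qed.

Lemma deg_bilin_mnm a b :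
  [/\ deg1 (bilin_mnm a b) = 1%N, deg2 (bilin_mnm a b) = 1%N
    & deg3 (bilin_mnm a b) = 1%N].
Proof.
have mE l : bilin_mnm a b l = ((iv a == l) + (iM a b == l) + (iw b == l))%N.
  by rewrite /bilin_mnm !mnmDE !mnm1E.
rewrite /deg1 /deg2 /deg3 !(eq_bigr _ (fun l _ => mE l)) !big_split /=.
rewrite !sum_pred1 /=; have : (n1 + n2 <= iM a b)%N := leq_addr _ _.
by have := ltn_ord a; have := ltn_ord b; move: (iM a b : nat) => k; split; lia.
Qed.

Lemma bilin_multihomog : multihomog bilin 1 1 1.
Proof.
move=> m /msupp_sum_le/flattenP[_ /mapP[a _ ->]].
move=> /msupp_sum_le/flattenP[_ /mapP[b _ ->]].
by rewrite msuppX inE => /eqP ->; apply: deg_bilin_mnm.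
Qed.

Lemma bilin_Ginvariant : Ginvariant bilin.
Proof.
move=> g h ug uh v w M; rewrite /eval_act /act !meval_bilin trmx_mul !mulmxA.
have ggi : g^T *m (invmx g)^T = 1%:M by rewrite -trmx_mul mulVmx // trmx1.
by rewrite -(mulmxA _ g^T) ggi mulmx1 -(mulmxA _ (invmx h)) mulVmx // mulmx1.
Qed.

Definition vanishes_on_orbit (p : {mpoly C[N]}) v w M : Prop :=
  forall g h, g \in unitmx -> h \in unitmx -> eval_act p g h v w M = 0.

Section Vanishing.
Variables (p : {mpoly C[N]}) (a b c : nat).
Hypothesis p_homog : multihomog p a b c.

Lemma vanishes_on_orbit_act v w M g h :
  g \in unitmx -> h \in unitmx -> vanishes_on_orbit p v w M ->
  vanishes_on_orbit p (g *m v) (h *m w) ((invmx g)^T *m M *m invmx h).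
Proof.
move=> ug uh van g' h' ug' uh'; have := van (g' *m g) (h' *m h).
rewrite !unitmx_mul ug ug' uh uh' => /(_ isT isT).
by rewrite /eval_act /act !invmx_mul // trmx_mul !mulmxA.
Qed.

Lemma vanishes_on_orbit_scale v w M s t : s != 0 -> t != 0 ->
  vanishes_on_orbit p (s *: v) (t *: w) M -> vanishes_on_orbit p v w M.
Proof.
move=> s0 t0 van g h ug uh; have := van g h ug uh.
rewrite /eval_act /act -!scalemxAr -[X in coords _ _ X]scale1r.
rewrite (meval_coords_scale _ _ _ _ _ _ p_homog) expr1n mulr1 => /eqP.
by rewrite !mulf_eq0 !expf_eq0 (negbTE s0) (negbTE t0) !andbF => /eqP.
Qed.

Lemma vanishes_on_orbit_curve v w (Mt : 'M[{poly C}]_(n1, n2)) d s :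
  d != 0 ->
  (forall t, d.[t] != 0 -> vanishes_on_orbit p v w (map_mx (horner_eval t) Mt)) ->
  vanishes_on_orbit p v w (map_mx (horner_eval s) Mt).
Proof.
move=> d0 van g h ug uh.
pose x i := (row_mx (row_mx (map_mx polyC (g *m v))^T (map_mx polyC (h *m w))^T)
  (mxvec (map_mx polyC (invmx g)^T *m Mt *m map_mx polyC (invmx h)))) 0 i.
have xE t : eval_act p g h v w (map_mx (horner_eval t) Mt) = (mmap polyC x p).[t].
  rewrite horner_mmap_polyC /eval_act /act; apply: meval_eq => i.
  have entryE m k (A : 'M_(m, k)) j l :
    horner_eval t (A j l) = map_mx (horner_eval t) A j l by rewrite mxE.
  rewrite /x -horner_evalE entryE !map_row_mx map_mxvec -!map_trmx.
  by rewrite !map_mxM -map_trmx !map_mx_horner_polyC.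
suff x0 : mmap polyC x p = 0 by rewrite xE x0 horner0.
by apply: (poly_eq0_off_roots d0) => t /van van_t; rewrite -xE van_t.
Qed.

Lemma vanishes_on_orbit_meval v w M :
  vanishes_on_orbit p v w M -> p.@[coords v w M] = 0.
Proof.
move/(_ 1%:M 1%:M (unitmx1 _ _) (unitmx1 _ _)).
by rewrite /eval_act /act !mul1mx !invmx1 trmx1 mul1mx mulmx1.
Qed.

End Vanishing.

Hypotheses (n1_gt1 : (1 < n1)%N) (n2_gt1 : (1 < n2)%N).

Definition i0 : 'I_n1 := Ordinal (ltnW n1_gt1).
Definition i1 : 'I_n1 := Ordinal n1_gt1.
Definition j0 : 'I_n2 := Ordinal (ltnW n2_gt1).
Definition j1 : 'I_n2 := Ordinal n2_gt1.

Lemma e1E : e1 = delta_mx i0 0.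
Proof. by apply/matrixP => i j; rewrite !mxE ord1 eqxx andbT. Qed.
Lemma f2E : f2 = delta_mx j1 0.
Proof. by apply/matrixP => i j; rewrite !mxE ord1 eqxx andbT. Qed.
Lemma phinE : phin = pid_mx (minn n1 n2).
Proof. by apply/matrixP => i j; rewrite !mxE. Qed.

Lemma Ginvariant_meval_base (p : {mpoly C[N]}) k :
  (0 < k)%N -> multihomog p k k k -> Ginvariant p ->
  p.@[coords e1 f2 phin] = 0.
Proof.
move=> k_gt0 p_homog p_inv.
pose g := diag_mx (\row_i (if i == i0 then 2 else 1) : 'rV[C]_n1).
pose h := diag_mx (\row_j (if j == j0 then 2^-1 else 1) : 'rV[C]_n2).
have two_neq0 : (2 : C) != 0 by rewrite pnatr_eq0.
have ug : g \in unitmx.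
  rewrite unitmxE det_diag unitfE; apply/prodf_neq0 => i _.
  by rewrite mxE; case: ifP; rewrite ?oner_neq0.
have uh : h \in unitmx.
  rewrite unitmxE det_diag unitfE; apply/prodf_neq0 => j _.
  by rewrite mxE; case: ifP; rewrite ?invr_eq0 ?oner_neq0.
have ge1 : g *m e1 = 2 *: e1.
  apply/matrixP => i z; rewrite e1E mul_diag_mx !mxE.
  by case: (i == i0); rewrite ?mulr1 ?mulr0.
have hf2 : h *m f2 = 1 *: f2.
  apply/matrixP => j z; rewrite f2E mul_diag_mx !mxE mul1r.
  case: (eqVneq j j1) => [->|_]; last by rewrite mulr0.
  by have -> : (j1 == j0) = false by []; rewrite mul1r.
have g_phin_h : g^T *m phin *m h = phin.
  apply/matrixP => i j; rewrite tr_diag_mx mul_mx_diag mul_diag_mx !mxE.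
  case: (eqVneq (i : nat) j) => [eq_ij|]; last by rewrite !mulr0 !mul0r.
  have -> : (j == j0) = (i == i0) by rewrite -!val_eqE /= eq_ij.
  by case: (i == i0); rewrite ?mul1r ?mulr1 // mulrAC mulfV ?mul1r.
have phin_fix : (invmx g)^T *m phin *m invmx h = 1 *: phin.
  rewrite scale1r -{1}g_phin_h trmx_inv !mulmxA mulVmx ?unitmx_tr // mul1mx.
  by rewrite mulmxK.
have := p_inv g h ug uh e1 f2 phin.
rewrite /eval_act /act ge1 hf2 phin_fix (meval_coords_scale _ _ _ _ _ _ p_homog).
rewrite !expr1n !mulr1 => /eqP; rewrite -subr_eq0 -{2}[p.@[_]]mul1r -mulrBl.
by rewrite mulf_eq0 subr_eq0 pexpr_eq1 ?ler0n // pnatr_eq1 => /eqP.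
Qed.

Section BaseOrbit.
Variables (p : {mpoly C[N]}) (a b c : nat).
Hypothesis p_homog : multihomog p a b c.
Hypothesis p_base : vanishes_on_orbit p e1 f2 phin.

Lemma vanishes_on_orbit_base_factor A B :
  A^T *m e1 = e1 -> B *m f2 = f2 -> vanishes_on_orbit p e1 f2 (A *m phin *m B).
Proof.
move=> Ae1 Bf2.
pose d := char_poly (- A) * char_poly (- B) * ('X + 1%:P).
have d0 : d != 0 by apply: monic_neq0; rewrite !rpredM ?monicXaddC ?char_poly_monic.
have mxE0 k (X : 'M[C]_k) : map_mx (horner_eval 0) (char_poly_mx (- X)) = X.
  by rewrite map_mx_horner_char_poly_mx -scalemx1 scale0r sub0r opprK.
have := vanishes_on_orbit_curve (p := p) (v := e1) (w := f2)
  (Mt := char_poly_mx (- A) *m map_mx polyC phin *m char_poly_mx (- B)) 0 d0.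
rewrite !map_mxM !mxE0 map_mx_horner_polyC; apply=> t.
rewrite !map_mxM !map_mx_horner_char_poly_mx map_mx_horner_polyC !opprK.
rewrite /d !hornerM !horner_char_poly hornerD hornerX hornerC !mulf_eq0 !negb_or.
rewrite !opprK => /andP[/andP[detA detB] t1].
have uA : (t%:M + A)^T \in unitmx by rewrite unitmx_tr unitmxE unitfE.
have uB : t%:M + B \in unitmx by rewrite unitmxE unitfE.
have := vanishes_on_orbit_act (g := invmx (t%:M + A)^T) (h := invmx (t%:M + B)).
rewrite !unitmx_inv uA uB !invmxK trmxK => /(_ p _ _ _ isT isT p_base).
have eigen_e1 : (t%:M + A)^T *m e1 = (t + 1) *: e1.
  by rewrite linearD /= tr_scalar_mx mulmxDl Ae1 mul_scalar_mx scalerDl scale1r.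
have eigen_f2 : (t%:M + B) *m f2 = (t + 1) *: f2.
  by rewrite mulmxDl Bf2 mul_scalar_mx scalerDl scale1r.
rewrite (invmx_eigenvector uA t1 eigen_e1) (invmx_eigenvector uB t1 eigen_f2).
have t1V : (t + 1)^-1 != 0 by rewrite invr_eq0.
exact: (vanishes_on_orbit_scale p_homog t1V t1V).
Qed.

Lemma vanishes_on_orbit_generic_entry (q : 'I_n1) (q' : 'I_n2) :
  (q, q') != (i0, j1) ->
  (forall K : 'M_(n1, n2),
     K i0 j1 = 0 -> K q q' != 0 -> vanishes_on_orbit p e1 f2 K) ->
  forall K : 'M_(n1, n2), K i0 j1 = 0 -> vanishes_on_orbit p e1 f2 K.
Proof.
move=> qq' van_gen K K01; pose E : 'M[C]_(n1, n2) := delta_mx q q'.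
have d0 : 'X + (K q q')%:P != 0 by apply: monic_neq0; rewrite monicXaddC.
have := vanishes_on_orbit_curve (p := p) (v := e1) (w := f2)
  (Mt := map_mx polyC K + 'X *: map_mx polyC E) 0 d0.
rewrite !map_mx_horner_line scale0r addr0; apply=> t.
rewrite hornerD hornerX hornerC map_mx_horner_line => Kt; apply: van_gen.
  by rewrite !mxE K01 add0r eq_sym [j1 == _]eq_sym -xpair_eqE (negbTE qq') mulr0.
by rewrite !mxE !eqxx mulr1 addrC.
Qed.

Lemma vanishes_on_orbit_base_normal (K : 'M[C]_(n1, n2)) :
  K i0 j1 = 0 -> vanishes_on_orbit p e1 f2 K.
Proof.
have i01 : i0 != i1 by []; have j10 : j1 != j0 by [].
case: (leqP n1 n2) => [le12|/ltnW le21].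
  have ne11 : (i1, j1) != (i0, j1) by [].
  apply: (vanishes_on_orbit_generic_entry ne11) => K' K'01 K'11.
  have wi1 : widen_ord le12 i1 = j1 by apply: val_inj.
  move: (exists_pid_mx_factor (le_mk := le12) (X := K') i01) => /=.
  rewrite wi1 -e1E -f2E.
  case/(_ K'01 K'11) => A [B [-> Ae1 Bf2]].
  have -> : pid_mx n1 = phin by rewrite phinE (minn_idPl le12).
  exact: vanishes_on_orbit_base_factor.
(* transposition exchanges the roles of [e1] and [f2] *)
have ne00 : (i0, j0) != (i0, j1) by [].
apply: (vanishes_on_orbit_generic_entry ne00) => K' K'01 K'00.
have wj0 : widen_ord le21 j0 = i0 by apply: val_inj.
move: (exists_pid_mx_factor (le_mk := le21) (X := K'^T) j10) => /=.
rewrite wj0 -e1E -f2E !mxE.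
case/(_ K'01 K'00) => A [B [/(congr1 trmx) + Af2 Be1]]; rewrite trmxK => ->.
rewrite !trmx_mul mulmxA.
have -> : (pid_mx n2 : 'M_(n2, n1))^T = phin.
  by rewrite tr_pid_mx phinE (minn_idPr le21).
by apply: vanishes_on_orbit_base_factor; rewrite ?trmxK.
Qed.

Lemma vanishes_on_orbit_bilin_eq0 v w M : v != 0 -> w != 0 ->
  (v^T *m M *m w) 0 0 = 0 -> vanishes_on_orbit p v w M.
Proof.
move=> v0 w0; have [g ug <-] := exists_unitmx_col i0 v0.
have [h uh <-] := exists_unitmx_col j1 w0.
rewrite -e1E -f2E => vMw0.
have -> : M = (invmx g)^T *m (g^T *m M *m h) *m invmx h.
  by rewrite !mulmxA -trmx_mul mulmxV // trmx1 mul1mx mulmxK.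
apply: (vanishes_on_orbit_act ug uh); apply: vanishes_on_orbit_base_normal.
rewrite -vMw0 e1E f2E trmx_mul trmx_delta !mulmxA -colE [RHS]mxE.
by rewrite -!mulmxA -rowE [RHS]mxE.
Qed.

End BaseOrbit.

End Proposition3p3.

Theorem proposition3p3 (R : realType) (n1 n2 : nat) :
  (2 <= n1)%N -> (2 <= n2)%N ->
  forall (v : 'cV[R[i]]_n1) (w : 'cV[R[i]]_n2) (M : 'M[R[i]]_(n1, n2)),
    v != 0 -> w != 0 -> M != 0 ->
    (unstable v w M <-> in_orbit_closure v w M).
Proof.
move=> n1_gt1 n2_gt1 v w M v0 w0 _; split.
- move=> v_unstable a b c p p_homog p_base.
  have vMw0 : (v^T *m M *m w) 0 0 = 0.
    have [//|vMw_neq0] := eqVneq ((v^T *m M *m w) 0 0) 0; case: v_unstable.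
    exists 1%N; split=> //; exists (bilin R n1 n2).
    split; [exact: bilin_multihomog | exact: bilin_Ginvariant |].
    by rewrite meval_bilin.
  apply: vanishes_on_orbit_meval.
  exact: (vanishes_on_orbit_bilin_eq0 n1_gt1 n2_gt1 p_homog p_base v0 w0 vMw0).
- move=> v_closure [k [k_gt0 [p [p_homog p_inv /eqP[]]]]].
  apply: (v_closure k k k p p_homog) => g h ug uh.
  by rewrite p_inv // (Ginvariant_meval_base n1_gt1 n2_gt1 k_gt0 p_homog p_inv).
Qed.
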